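(* In the setting of the Theorem of Sect. 3.4 (solution $\{\tau_{m,n}\}$ of the lattice $q$-UC hierarchy with $I=\{1,2\}$, $J=\{-1,-2\}$, homogeneous with exponents $d_{m,n}$), assume moreover $\tau_{m+2,n}=\tau_{m,n+2}=\tau_{m,n}$ and $d_{m+2,n}=d_{m,n+2}=d_{m,n}$. Put $f=f_{1,1}$, $g=g_{1,2}$. Then, with $T=T_1T_2$, $\overline F=T(F)$, the evolution closes on $(f,g)$: $$\overline f=\frac{c_{1,1}}{f}\cdot\frac{(\alpha g-1)(g-c_{1,2}\beta)}{(g-\alpha)(\beta g-c_{1,2})},\qquad \overline g=\frac{c_{1,2}}{g}\cdot\frac{(q\gamma\overline f-1)(\overline f-c_{1,1}\delta)}{(\overline f-q\gamma)(\delta\overline f-c_{1,1})},$$ where $(\overline\alpha,\overline\beta,\overline\gamma,\overline\delta)=(q\alpha,\beta/q,q\gamma,\delta/q)$ and $\alpha\delta/(\beta\gamma)=1$ (the $q$-analogue of the sixth Painlevé equation).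
   Context: $q\in\mathbb C^*$, $\boldsymbol t=(t_1,t_2,t_{-1},t_{-2})$; $T_k(t_k)=qt_k$ ($k=1,2$), $T_k(t_k)=q^{-1}t_k$ ($k=-1,-2$), $T_k(t_l)=t_l$ ($l\ne k$); $F^{(i_1,\dots,i_r)}=T_{i_1}\cdots T_{i_r}(F)$. The lattice $q$-UC hierarchy: $t_iT_i(\tau_{m,n+1})T_j(\tau_{m+1,n})-t_jT_j(\tau_{m,n+1})T_i(\tau_{m+1,n})=(t_i-t_j)T_iT_j(\tau_{m,n})\tau_{m+1,n+1}$ for all $i,j\in\{1,2,-1,-2\}$, $(m,n)\in\mathbb Z^2$, with $\tau_{m,n}$ nowhere vanishing and $\tau_{m,n}(q\boldsymbol t)=q^{d_{m,n}}\tau_{m,n}(\boldsymbol t)$, $d_{m,n}+d_{m+1,n+1}=d_{m,n+1}+d_{m+1,n}$. Definitions: $w_{m,n}=\tau_{m+1,n}/\tau_{m,n+1}$, $c_{m,n}=q^{d_{m+1,n}-d_{m,n+1}}$, $f_{m,n}=w^{(1)}_{m,n}/w^{(-1)}_{m,n}$, $g_{m,n}=w^{(1,-1)}_{m,n}/w^{(-1,-2)}_{m,n}$, $\alpha=t_1/t_{-2}$, $\beta=t_{-1}/t_2$, $\gamma=t_1/t_{-1}$, $\delta=t_{-2}/t_2$. *)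

From HB Require Import structures.
From mathcomp Require Import all_boot all_order all_algebra.
Set Implicit Arguments. Unset Strict Implicit. Unset Printing Implicit Defensive.
Import Order.TTheory GRing.Theory Num.Theory.
Local Open Scope ring_scope.

Inductive dir := d1 | d2 | dm1 | dm2.

Definition dir_eqb (k l : dir) : bool :=
  match k, l with
  | d1, d1 | d2, d2 | dm1, dm1 | dm2, dm2 => true
  | _, _ => false
  end.

Section Defs.
Variable K : numClosedFieldType.

Definition admissible (t : dir -> K) : Prop := forall k, t k != 0.

Definition Tsh (q : K) (k : dir) (t : dir -> K) : dir -> K :=
  fun l => if dir_eqb k l then
             (match k with d1 | d2 => q | _ => q^-1 end) * t l
           else t l.

Definition qscale (q : K) (t : dir -> K) : dir -> K := fun l => q * t l.

Definition quc_eq (q : K) (tau : int -> int -> (dir -> K) -> K)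
  (i j : dir) (m n : int) (t : dir -> K) : Prop :=
  t i * tau m (n + 1) (Tsh q i t) * tau (m + 1) n (Tsh q j t)
  - t j * tau m (n + 1) (Tsh q j t) * tau (m + 1) n (Tsh q i t)
  = (t i - t j) * tau m n (Tsh q i (Tsh q j t)) * tau (m + 1) (n + 1) t.

Definition wf (tau : int -> int -> (dir -> K) -> K) (m n : int) (t : dir -> K) : K :=
  tau (m + 1) n t / tau m (n + 1) t.

Definition cc (q : K) (d : int -> int -> int) (m n : int) : K :=
  q ^ (d (m + 1) n - d m (n + 1)).

Definition ff (q : K) tau (m n : int) (t : dir -> K) : K :=
  wf tau m n (Tsh q d1 t) / wf tau m n (Tsh q dm1 t).

Definition gf (q : K) tau (m n : int) (t : dir -> K) : K :=
  wf tau m n (Tsh q dm1 (Tsh q d1 t)) / wf tau m n (Tsh q dm2 (Tsh q dm1 t)).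

Definition Tbar (q : K) (t : dir -> K) : dir -> K := Tsh q d2 (Tsh q d1 t).

Definition alpha (t : dir -> K) : K := t d1 / t dm2.
Definition beta  (t : dir -> K) : K := t dm1 / t d2.
Definition gamma (t : dir -> K) : K := t d1 / t dm1.
Definition delta (t : dir -> K) : K := t dm2 / t d2.

End Defs.

From HB Require Import structures.
From mathcomp Require Import all_boot all_order all_algebra ring.
From Stdlib Require Import FunctionalExtensionality.
Import Order.TTheory GRing.Theory Num.Theory.
Local Open Scope ring_scope.

(* Since tau is 2-periodic in both indices, the bilinear equations at (m, n)
   and (m + 1, n + 1) involve the same four functions with tau_{m+1,n} and
   tau_{m,n+1} exchanged; combining them gives a bilinear relation between
   w_{m,n} and w_{m,n+1} alone, as tau_{m+1,n+1} / tau_{m,n} = w_{m,n+1}.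
   By homogeneity and T_1T_2 t = q T_{-1}T_{-2} t, fbar and gbar are ratios of
   values of w_{1,1}, resp. w_{1,2}, at points reached from t by T_1 and the
   T_{-k}.  Two instances of the bilinear relation express numerator and
   denominator as Moebius functions of g t, resp. of fbar, and their quotient
   is the q-P_VI evolution. *)

Lemma bilinear_pair_ratio (F : fieldType) (ti tj A B C D E Fv G H : F) :
  A != 0 -> C != 0 -> E != 0 -> H != 0 ->
  ti * A * B - tj * C * D = (ti - tj) * E * Fv ->
  ti * D * C - tj * B * A = (ti - tj) * G * H ->
  Fv / H * (ti * (D / A) - tj * (B / C)) = G / E * (ti * (B / C) - tj * (D / A)).
Proof.
move=> AP CP EP HP e1 e2.
have key : Fv * E * (ti * D * C - tj * B * A) = G * H * (ti * A * B - tj * C * D).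
  by rewrite e1 e2; ring.
transitivity (Fv * E * (ti * D * C - tj * B * A) / (H * E * A * C)).
  by field; rewrite AP CP EP HP.
by rewrite key; field; rewrite AP CP EP HP.
Qed.

Lemma mobius_pair_ratio (F : fieldType) (a1 a2 b1 b2 c c' x y z1 z2 u v : F) :
  a2 != 0 -> b1 != 0 -> c' != 0 -> x != 0 -> y != 0 -> z2 != 0 -> v != 0 ->
  x * (a1 * z1 - a2 * z2) = u * (a1 * z2 - a2 * z1) ->
  y * (b1 * (c * z2) - b2 * z1) = c' * v * (b1 * z1 - b2 * (c * z2)) ->
  (z1 / z2 - a1 / a2) * (b2 / b1 * (z1 / z2) - c) != 0 ->
  u / v = c' / (y / x) * ((a1 / a2 * (z1 / z2) - 1) * (z1 / z2 - c * (b2 / b1))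
                          / ((z1 / z2 - a1 / a2) * (b2 / b1 * (z1 / z2) - c))).
Proof.
move=> a2P b1P c'P xP yP z2P vP e1 e2.
set N := (a1 * z1 - a2 * z2) * (b1 * z1 - b2 * (c * z2)).
set D := (a1 * z2 - a2 * z1) * (b1 * (c * z2) - b2 * z1).
have -> : (z1 / z2 - a1 / a2) * (b2 / b1 * (z1 / z2) - c) = D / (a2 * b1 * z2 ^+ 2).
  by rewrite /D; field; rewrite a2P b1P z2P.
move=> DzP; have DP : D != 0 by apply: contraNneq DzP => ->; rewrite mul0r.
have -> : (a1 / a2 * (z1 / z2) - 1) * (z1 / z2 - c * (b2 / b1)) = N / (a2 * b1 * z2 ^+ 2).
  by rewrite /N; field; rewrite a2P b1P z2P.
have key : u * y * D = c' * v * x * N.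
  transitivity (u * (a1 * z2 - a2 * z1) * (y * (b1 * (c * z2) - b2 * z1))).
    by rewrite /D; ring.
  by rewrite -e1 e2 /N; ring.
apply/eqP; rewrite -subr_eq0.
have -> : u / v - c' / (y / x) * (N / (a2 * b1 * z2 ^+ 2) / (D / (a2 * b1 * z2 ^+ 2)))
          = (u * y * D - c' * v * x * N) / (v * y * D).
  by field; rewrite vP yP xP DP a2P b1P z2P.
by rewrite key subrr mul0r.
Qed.

Section TimeShifts.
Variables (K : numClosedFieldType) (q : K).

Lemma Tsh_comm k l t : Tsh q k (Tsh q l t) = Tsh q l (Tsh q k t).
Proof.
by apply: functional_extensionality => x; case: k; case: l; case: x; rewrite /Tsh //= mulrCA.
Qed.

Lemma Tsh_qscale k t : Tsh q k (qscale q t) = qscale q (Tsh q k t).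
Proof.
by apply: functional_extensionality => x; case: k; case: x; rewrite /Tsh /qscale //= mulrCA.
Qed.

Lemma Tbar_qscale t : q != 0 -> Tbar q t = qscale q (Tsh q dm2 (Tsh q dm1 t)).
Proof.
move=> qP; apply: functional_extensionality => -[];
  by rewrite /Tbar /Tsh /qscale //= mulrA mulfV ?mul1r.
Qed.

Lemma admissible_Tsh k t : q != 0 -> admissible t -> admissible (Tsh q k t).
Proof.
move=> qP tP l; rewrite /Tsh; case: (dir_eqb k l); last exact: tP.
by apply: mulf_neq0 => //; case: k; rewrite ?invr_eq0.
Qed.

End TimeShifts.

Arguments Tsh_comm {K q} k l t.
Arguments admissible_Tsh {K q} k {t}.

Section PeriodicSolution.
Variables (K : numClosedFieldType) (q : K) (tau : int -> int -> (dir -> K) -> K).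
Hypothesis q_neq0 : q != 0.
Hypothesis tau_neq0 : forall m n t, admissible t -> tau m n t != 0.
Hypothesis tau_quc : forall i j m n t, admissible t -> quc_eq q tau i j m n t.
Hypothesis tau_periodic : forall m n t, admissible t ->
  tau (m + 2) n t = tau m n t /\ tau m (n + 2) t = tau m n t.

Let admissible_T k t : admissible t -> admissible (Tsh q k t) := admissible_Tsh k q_neq0.
#[local] Hint Resolve admissible_T : core.

Lemma wf_neq0 m n s : admissible s -> wf tau m n s != 0.
Proof. by move=> sP; rewrite /wf mulf_neq0 ?invr_eq0 ?tau_neq0. Qed.

Lemma tau_periodicl m n t : admissible t -> tau (m + 1 + 1) n t = tau m n t.
Proof. by move=> tP; rewrite -addrA [1 + 1]/2 (tau_periodic m n t tP).1. Qed.

Lemma tau_periodicr m n t : admissible t -> tau m (n + 1 + 1) t = tau m n t.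
Proof. by move=> tP; rewrite -addrA [1 + 1]/2 (tau_periodic m n t tP).2. Qed.

Lemma wf_periodic m n s : admissible s -> wf tau m (n + 1 + 1) s = wf tau m n s.
Proof. by move=> sP; rewrite /wf addrAC !tau_periodicr. Qed.

Lemma wf_bilinear i j m n s : admissible s ->
  wf tau m (n + 1) s * (s i * wf tau m n (Tsh q i s) - s j * wf tau m n (Tsh q j s))
  = wf tau m (n + 1) (Tsh q i (Tsh q j s))
    * (s i * wf tau m n (Tsh q j s) - s j * wf tau m n (Tsh q i s)).
Proof.
move=> sP; have quc_mn := tau_quc i j m n s sP.
have quc_next := tau_quc i j (m + 1) (n + 1) s sP.
rewrite /quc_eq !tau_periodicl ?tau_periodicr in quc_next; auto.
rewrite /wf !tau_periodicr; auto.
by apply: bilinear_pair_ratio quc_mn quc_next; apply: tau_neq0; auto.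
Qed.

Local Notation w11 := (wf tau 1 1).
Local Notation w12 := (wf tau 1 2).

Lemma w11_bilinear i j s : admissible s ->
  w11 s * (s i * w12 (Tsh q i s) - s j * w12 (Tsh q j s))
  = w11 (Tsh q i (Tsh q j s)) * (s i * w12 (Tsh q j s) - s j * w12 (Tsh q i s)).
Proof.
move=> sP; have := wf_bilinear i j 1 (1 + 1) s sP.
by rewrite !wf_periodic; auto.
Qed.

Lemma w12_bilinear i j s : admissible s ->
  w12 s * (s i * w11 (Tsh q i s) - s j * w11 (Tsh q j s))
  = w12 (Tsh q i (Tsh q j s)) * (s i * w11 (Tsh q j s) - s j * w11 (Tsh q i s)).
Proof. exact: wf_bilinear. Qed.

Variable d : int -> int -> int.
Hypothesis tau_hom :
  forall m n t, admissible t -> tau m n (qscale q t) = q ^ d m n * tau m n t.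

Lemma cc_neq0 m n : cc q d m n != 0.
Proof. exact: expfz_neq0. Qed.

Lemma wf_qscale m n s : admissible s -> wf tau m n (qscale q s) = cc q d m n * wf tau m n s.
Proof.
move=> sP; rewrite /wf /cc !tau_hom // expfzDr // -invr_expz.
by field; rewrite tau_neq0 // expfz_neq0.
Qed.

Local Notation f := (ff q tau 1 1).
Local Notation g := (gf q tau 1 2).
Local Notation c11 := (cc q d 1 1).
Local Notation c12 := (cc q d 1 2).

Lemma ff_Tbar_wf t : admissible t ->
  f (Tbar q t) = w11 (Tsh q d1 (Tsh q dm2 (Tsh q dm1 t)))
                 / w11 (Tsh q dm1 (Tsh q dm2 (Tsh q dm1 t))).
Proof.
move=> tP; rewrite /ff Tbar_qscale // !Tsh_qscale !wf_qscale; auto.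
by rewrite -mulf_div divff ?cc_neq0 ?mul1r.
Qed.

Lemma gf_Tbar_wf t : admissible t ->
  g (Tbar q t) = w12 (Tsh q dm1 (Tsh q d1 (Tsh q dm2 (Tsh q dm1 t))))
                 / w12 (Tsh q dm2 (Tsh q dm1 (Tsh q dm2 (Tsh q dm1 t)))).
Proof.
move=> tP; rewrite /gf Tbar_qscale // !Tsh_qscale !wf_qscale; auto.
by rewrite -mulf_div divff ?cc_neq0 ?mul1r.
Qed.

Lemma Tsh_d2_dm1_d1 t :
  Tsh q d2 (Tsh q dm1 (Tsh q d1 t)) = qscale q (Tsh q dm1 (Tsh q dm2 (Tsh q dm1 t))).
Proof. by rewrite Tsh_comm -/(Tbar q t) Tbar_qscale // Tsh_qscale. Qed.

Lemma ff_Tbar t : admissible t ->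
  (g t - alpha t) * (beta t * g t - c12) != 0 ->
  f (Tbar q t) = c11 / f t * ((alpha t * g t - 1) * (g t - c12 * beta t)
                              / ((g t - alpha t) * (beta t * g t - c12))).
Proof.
move=> tP.
have num_rel := w11_bilinear d1 dm2 _ (admissible_T dm1 _ tP).
rewrite [Tsh q d1 (Tsh q dm1 t)]Tsh_comm in num_rel.
have den_rel := w11_bilinear d2 dm1 _ (admissible_T d1 _ tP).
rewrite Tsh_d2_dm1_d1 -/(Tbar q t) Tbar_qscale // !wf_qscale in den_rel; auto.
rewrite ff_Tbar_wf // /ff /gf /alpha /beta.
apply: mobius_pair_ratio; [..| exact: num_rel | exact: den_rel].
all: by [exact: tP | exact: cc_neq0 | apply: wf_neq0; auto].
Qed.

Lemma gf_Tbar t : admissible t ->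
  (f (Tbar q t) - q * gamma t) * (delta t * f (Tbar q t) - c11) != 0 ->
  g (Tbar q t)
  = c12 / g t * ((q * gamma t * f (Tbar q t) - 1) * (f (Tbar q t) - c11 * delta t)
                 / ((f (Tbar q t) - q * gamma t) * (delta t * f (Tbar q t) - c11))).
Proof.
move=> tP.
have num_rel := w12_bilinear d1 dm1 _ (admissible_T dm2 _ (admissible_T dm1 _ tP)).
rewrite [Tsh q d1 (Tsh q dm1 _)]Tsh_comm in num_rel.
have den_rel := w12_bilinear d2 dm2 _ (admissible_T dm1 _ (admissible_T d1 _ tP)).
have T2Tm2s : Tsh q d2 (Tsh q dm2 (Tsh q dm1 (Tsh q d1 t)))
              = qscale q (Tsh q dm2 (Tsh q dm1 (Tsh q dm2 (Tsh q dm1 t)))).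
  by rewrite Tsh_comm Tsh_d2_dm1_d1 Tsh_qscale.
have Tm2s : Tsh q dm2 (Tsh q dm1 (Tsh q d1 t)) = Tsh q d1 (Tsh q dm2 (Tsh q dm1 t)).
  by rewrite (Tsh_comm dm1 d1) Tsh_comm.
rewrite T2Tm2s Tsh_d2_dm1_d1 Tm2s !wf_qscale in den_rel; auto.
have -> : q * gamma t = t d1 / (q^-1 * t dm1) by rewrite /gamma; field; rewrite q_neq0 tP.
rewrite gf_Tbar_wf // ff_Tbar_wf // /gf /delta.
apply: mobius_pair_ratio; [..| exact: num_rel | exact: den_rel].
all: by [exact: tP | exact: cc_neq0 | rewrite mulf_neq0 ?invr_eq0 ?tP | apply: wf_neq0; auto].
Qed.

End PeriodicSolution.

Theorem mainTheorem6 (K : numClosedFieldType) (q : K)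
  (tau : int -> int -> (dir -> K) -> K) (d : int -> int -> int) :
  q != 0 ->
  (forall m n t, admissible t -> tau m n t != 0) ->
  (forall m n t, admissible t -> tau m n (qscale q t) = q ^ d m n * tau m n t) ->
  (forall m n, d m n + d (m + 1) (n + 1) = d m (n + 1) + d (m + 1) n) ->
  (forall i j m n t, admissible t -> quc_eq q tau i j m n t) ->
  (forall m n t, admissible t ->
     tau (m + 2) n t = tau m n t /\ tau m (n + 2) t = tau m n t) ->
  (forall m n, d (m + 2) n = d m n /\ d m (n + 2) = d m n) ->
  forall t, admissible t ->
    let f := ff q tau 1 1 in
    let g := gf q tau 1 2 in
    let c11 := cc q d 1 1 in
    let c12 := cc q d 1 2 in
    let fb := f (Tbar q t) in
    let gb := g (Tbar q t) in
    ((g t - alpha t) * (beta t * g t - c12) != 0 ->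
       fb = c11 / f t * ((alpha t * g t - 1) * (g t - c12 * beta t)
                         / ((g t - alpha t) * (beta t * g t - c12)))) /\
    ((fb - q * gamma t) * (delta t * fb - c11) != 0 ->
       gb = c12 / g t * ((q * gamma t * fb - 1) * (fb - c11 * delta t)
                         / ((fb - q * gamma t) * (delta t * fb - c11)))).
Proof.
move=> qP tau_neq0 tau_hom _ tau_quc tau_periodic _ t tP.
by split; [apply: ff_Tbar | apply: gf_Tbar].
Qed.
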